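(* Let $v\in\mathbb{N}$ and $S\subset\mathbb{N}_0$ finite. (a) If $S$ is up-admissible for $v$, then $S$ is down-admissible for $w=v(S)$ and $v=w[S]$. (b) If $S$ is down-admissible for $v$, then $S$ is up-admissible for $u=v[S]$ and $v=u(S)$.
   Context: Fix a prime $p$; $\mathbb{N}=\{1,2,\dots\}$, $\mathbb{N}_0=\mathbb{N}\cup\{0\}$. For $v\in\mathbb{N}$ write $v=\sum_{i=0}^{j}a_ip^i$ with $0\le a_i\le p-1$, $a_j\ne0$, and $a_i=0$ for $i>j$. A finite $S\subset\mathbb{N}_0$ splits uniquely into maximal subsets of consecutive integers (blocks). $S$ is down-admissible for $v$ if (d1) $a_{\min B}\ne0$ for every block $B$ of $S$ and (d2) $s\in S$, $a_{s+1}=0$ imply $s+1\in S$; then $v[S]:=\sum_i\epsilon_ia_ip^i$ with $\epsilon_i=-1$ for $i\in S$, $\epsilon_i=1$ otherwise. $S$ is up-admissible for $v$ if (u1) $a_{\min B}\ne0$ for every block $B$ of $S$ and (u2) $s\in S$, $a_{s+1}=p-1$ imply $s+1\in S$; then $v(S):=\sum_ka'_kp^k$ with $a'_k=-a_k$ for $k\in S$, $a'_k=a_k+2$ for $k\notin S$, $k-1\in S$, and $a'_k=a_k$ otherwise. Admissibility for $v(S)$ or $v[S]$ refers to the $p$-adic digits of these numbers. *)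

From mathcomp Require Import all_boot all_order all_algebra.
Set Implicit Arguments. Unset Strict Implicit. Unset Printing Implicit Defensive.
Import Order.TTheory GRing.Theory Num.Theory.

Definition digit (p v i : nat) : nat := (v %/ p ^ i) %% p.

(* A finite subset S of N_0 is represented by a list S : seq nat (membership
   via \in).  The block [m, n] = {m, ..., n} is a maximal subset of
   consecutive integers of S. *)
Definition is_block (S : seq nat) (m n : nat) : Prop :=
  m <= n /\ (forall i, m <= i <= n -> i \in S) /\
  (m = 0 \/ m.-1 \notin S) /\ n.+1 \notin S.

Definition down_adm (p v : nat) (S : seq nat) : Prop :=
  (forall m n, is_block S m n -> digit p v m != 0) /\
  (forall s, s \in S -> digit p v s.+1 = 0 -> s.+1 \in S).

Definition up_adm (p v : nat) (S : seq nat) : Prop :=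
  (forall m n, is_block S m n -> digit p v m != 0) /\
  (forall s, s \in S -> digit p v s.+1 = p.-1 -> s.+1 \in S).

(* A bound beyond which all digits of v vanish and which exceeds max S + 1,
   so that the (formally infinite) sums below are finite sums over k < bnd. *)
Definition bnd (v : nat) (S : seq nat) : nat := v + (\max_(s <- S) s).+2.

Local Open Scope ring_scope.

Definition vdown (p v : nat) (S : seq nat) : int :=
  \sum_(i < bnd v S)
    (if (i : nat) \in S then - (digit p v i)%:Z else (digit p v i)%:Z)
      * (p ^ i)%N%:Z.

Definition vup (p v : nat) (S : seq nat) : int :=
  \sum_(k < bnd v S)
    (if (k : nat) \in S then - (digit p v k)%:Z
     else if (0 < (k : nat))%N && ((k : nat).-1 \in S)
          then (digit p v k)%:Z + 2
          else (digit p v k)%:Z)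
      * (p ^ k)%N%:Z.

From mathcomp Require Import all_boot all_order all_algebra.
From mathcomp Require Import zify ring.
Import Order.TTheory GRing.Theory Num.Theory.
Local Open Scope ring_scope.

(* Let a_k be the digits of v and c_k := p [k \in S] - [k - 1 \in S].  The c_k p^k telescope, so
   they sum to 0 over any range beyond max S + 1; hence v(S) = \sum_k (a'_k + c_k) p^k.
   Up-admissibility says exactly that every b_k := a'_k + c_k lies in [0, p), so the b_k are the
   digits of w = v(S); applying the signs of [S] to b_k gives a_k - c_k, whose radix sum is v.
   Part (b) is the same computation with the two sign patterns exchanged. *)

Definition prev_in (S : seq nat) (k : nat) : bool := (0 < k)%N && (k.-1 \in S).
Definition block_start (S : seq nat) (k : nat) : bool := (k \in S) && ~~ prev_in S k.
Definition block_exit (S : seq nat) (k : nat) : bool := prev_in S k && (k \notin S).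

Section Blocks.
Context {S : seq nat}.

Lemma mem_le_max x : x \in S -> (x <= \max_(s <- S) s)%N.
Proof. by move=> xS; apply: (leq_bigmax_seq (F := id)). Qed.

Lemma is_block_start m n : is_block S m n -> block_start S m.
Proof.
move=> [le_mn [inS [m0 _]]]; rewrite /block_start /prev_in inS ?leqnn ?le_mn //.
by case: m0 => [->|/negPf->] //; rewrite andbF.
Qed.

Lemma block_startP k : block_start S k -> exists n, is_block S k n.
Proof.
move=> /andP[kS not_prev].
have [|n /andP[le_kn n1S] min_n] := ex_minnP (P := fun n => (k <= n)%N && (n.+1 \notin S)).
  exists (k + \max_(s <- S) s)%N; rewrite leq_addr /=.
  by apply/negP => /mem_le_max; lia.
exists n; split=> //; split; last first.
  split=> //; move: not_prev; rewrite /prev_in negb_and -leqNgt leqn0.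
  by case/orP=> [/eqP|]; [left | right].
move=> [|i] /andP[le_ki le_in]; first by rewrite (_ : 0%N = k) //; lia.
case: (ltngtP k i.+1) => [lt_ki||<-//]; last by lia.
by apply/negPn/negP => iS; have := min_n i; rewrite iS andbT; lia.
Qed.

Lemma block_start_exists x : x \in S -> exists k, block_start S k.
Proof.
move=> xS; have [m mS min_m] := ex_minnP (ex_intro (fun k => k \in S) x xS).
exists m; rewrite /block_start /prev_in mS /=.
by apply/negP => /andP[m_gt0 /min_m]; lia.
Qed.

Lemma block_start_digitsP (P : pred nat) :
  (forall m n, is_block S m n -> P m) <-> (forall k, block_start S k -> P k).
Proof.
split=> [hP k /block_startP[n /hP]//|hP m n /is_block_start]; exact: hP.
Qed.

Lemma succ_closedP (P : nat -> Prop) :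
  (forall s, s \in S -> P s.+1 -> s.+1 \in S) <-> (forall k, block_exit S k -> ~ P k).
Proof.
split=> [hP [|k] //= /andP[kS /negP k1S] /(hP _ kS)//|hP s sS Ps1].
by apply/negPn/negP => s1S; apply: (hP s.+1 _ Ps1); rewrite /block_exit /prev_in /= sS.
Qed.

Lemma bnd_out v k : (bnd v S <= k)%N -> [/\ (v <= k)%N, k \notin S & ~~ prev_in S k].
Proof.
rewrite /bnd /prev_in => le_bk.
have notinS j : (\max_(s <- S) s < j)%N -> j \notin S.
  by apply: contraTN => /mem_le_max; lia.
by split; [lia | apply: notinS; lia | case: k le_bk => //= k le_bk; apply: notinS; lia].
Qed.

End Blocks.

Lemma digit0 p i : digit p 0 i = 0%N.
Proof. by rewrite /digit div0n mod0n. Qed.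

Definition radix_sum (p N : nat) (e : nat -> int) : int :=
  \sum_(k < N) e k * (p ^ k)%N%:Z.

Lemma radix_sum_ext p N M e :
  (N <= M)%N -> (forall k, (N <= k)%N -> e k = 0) -> radix_sum p M e = radix_sum p N e.
Proof.
move=> le_NM e_out; rewrite /radix_sum -!(big_mkord xpredT (fun k => e k * (p ^ k)%N%:Z)).
rewrite (big_cat_nat (leq0n N) le_NM) /=.
rewrite [X in _ + X = _]big1_seq ?addr0 // => k /andP[_].
by rewrite mem_index_iota => /andP[/e_out-> _]; rewrite mul0r.
Qed.

Lemma radix_sumD p N e1 e2 :
  radix_sum p N (fun k => e1 k + e2 k) = radix_sum p N e1 + radix_sum p N e2.
Proof. by rewrite /radix_sum -big_split; apply: eq_bigr => k _; rewrite mulrDl. Qed.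

Lemma radix_sumB p N e1 e2 :
  radix_sum p N (fun k => e1 k - e2 k) = radix_sum p N e1 - radix_sum p N e2.
Proof. by rewrite /radix_sum -sumrB; apply: eq_bigr => k _; rewrite mulrBl. Qed.

Lemma eq_radix_sum p N e1 e2 : e1 =1 e2 -> radix_sum p N e1 = radix_sum p N e2.
Proof. by move=> e12; apply: eq_bigr => k _; rewrite e12. Qed.

Definition carry (p : nat) (s q : bool) : int := p%:Z * (s : nat)%:Z - (q : nat)%:Z.

Lemma radix_sum_carry p S N :
  radix_sum p N (fun k => carry p (k \in S) (prev_in S k))
  = (prev_in S N : nat)%:Z * (p ^ N)%N%:Z.
Proof.
pose u k := (prev_in S k : nat)%:Z * (p ^ k)%N%:Z.
rewrite /radix_sum -(big_mkord xpredT (fun k => carry p (k \in S) (prev_in S k) * (p ^ k)%N%:Z)).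
rewrite -[RHS]subr0 -[X in _ - X]/(u 0%N) -telescope_sumr //.
by apply: eq_bigr => k _; rewrite /u /carry /prev_in /= expnS PoszM; ring.
Qed.

Section Digits.
Context {p : nat} (p_gt1 : (1 < p)%N).

Lemma digit_lt v i : (digit p v i < p)%N.
Proof. by rewrite ltn_mod; lia. Qed.

Lemma digitS v i : digit p v i.+1 = digit p (v %/ p) i.
Proof. by rewrite /digit expnS divnMA. Qed.

Lemma digit_eq0 v i : (v <= i)%N -> digit p v i = 0%N.
Proof.
move=> le_vi; rewrite /digit divn_small ?mod0n //.
by apply: (leq_trans (ltn_expl v p_gt1)); rewrite leq_pexp2l //; lia.
Qed.

Lemma digit_sum_exp N (b : nat -> nat) i :
  (forall k, (b k < p)%N) -> (forall k, (N <= k)%N -> b k = 0%N) ->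
  digit p (\sum_(k < N) b k * p ^ k)%N i = b i.
Proof.
elim: N b i => [|N IH] b i b_lt b_out; first by rewrite big_ord0 digit0 b_out.
rewrite big_ord_recl /= muln1.
have -> : (\sum_(k < N) b (bump 0 k) * p ^ bump 0 k = (\sum_(k < N) b k.+1 * p ^ k) * p)%N.
  by rewrite big_distrl; apply: eq_bigr => k _; rewrite expnS mulnCA mulnC.
case: i => [|i]; first by rewrite /digit expn0 divn1 addnC modnMDl modn_small.
rewrite digitS addnC divnMDl ?divn_small ?addn0 //; last lia.
by apply: (IH (fun k => b k.+1)) => // k le_Nk; apply: b_out.
Qed.

Lemma sum_digit_exp N v : (v < p ^ N)%N -> (\sum_(k < N) digit p v k * p ^ k)%N = v.
Proof.
elim: N v => [|N IH] v lt_v; first by move: lt_v; rewrite big_ord0 expn0; case: v.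
rewrite big_ord_recl /= muln1.
have -> : (\sum_(k < N) digit p v (bump 0 k) * p ^ bump 0 k
          = (\sum_(k < N) digit p (v %/ p) k * p ^ k) * p)%N.
  by rewrite big_distrl; apply: eq_bigr => k _; rewrite digitS expnS mulnCA mulnC.
rewrite IH; first by rewrite /digit expn0 divn1 addnC -divn_eq.
by rewrite ltn_divLR -?expnSr //; lia.
Qed.

Lemma radix_sum_digit N v : (v < p ^ N)%N -> radix_sum p N (fun k => (digit p v k)%:Z) = v%:Z.
Proof.
move=> /sum_digit_exp {2}<-; rewrite -natz natr_sum /radix_sum.
by apply: eq_bigr => k _; rewrite natz PoszM.
Qed.

Lemma radix_sum_digits N (e : nat -> int) :
  (forall k, 0 <= e k < p%:Z) -> (forall k, (N <= k)%N -> e k = 0) ->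
  exists w : nat, w%:Z = radix_sum p N e /\ forall k, (digit p w k)%:Z = e k.
Proof.
move=> e_digit e_out.
have e_nat k : e k = `|e k|%N%:Z by rewrite abszE ger0_norm; case/andP: (e_digit k).
exists (\sum_(k < N) `|e k|%N * p ^ k)%N; split.
  by rewrite -natz natr_sum /radix_sum; apply: eq_bigr => k _; rewrite natz PoszM -e_nat.
move=> k; rewrite (digit_sum_exp N (fun k => `|e k|%N)) -?e_nat // => [j | j /e_out ->//].
by have := e_digit j; rewrite {1 2}e_nat; lia.
Qed.

End Digits.

Definition down_coef (s : bool) (x : int) : int := if s then - x else x.

Definition up_coef (s q : bool) (x : int) : int := if s then - x else if q then x + 2 else x.

Lemma down_up_coef_carry p s q x : down_coef s (up_coef s q x + carry p s q) = x - carry p s q.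
Proof. by case: s q => -[]; rewrite /down_coef /up_coef /carry /=; ring. Qed.

Lemma up_down_coef_carry p s q x : up_coef s q (down_coef s x + carry p s q) = x - carry p s q.
Proof. by case: s q => -[]; rewrite /down_coef /up_coef /carry /=; ring. Qed.

Definition coefs (F : bool -> bool -> int -> int) (p : nat) (S : seq nat) (n k : nat) : int :=
  F (k \in S) (prev_in S k) (digit p n k)%:Z.

Definition carried F p S n k : int := coefs F p S n k + carry p (k \in S) (prev_in S k).

Lemma vdownE p v S :
  vdown p v S = radix_sum p (bnd v S) (coefs (fun s _ => down_coef s) p S v).
Proof. by []. Qed.

Lemma vupE p v S : vup p v S = radix_sum p (bnd v S) (coefs up_coef p S v).
Proof. by []. Qed.

Section Renormalization.
Context {p : nat} {S : seq nat} {F G : bool -> bool -> int -> int}.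
Hypotheses (p_gt1 : (1 < p)%N) (F0 : F false false 0 = 0) (G0 : G false false 0 = 0).
Hypothesis GF : forall s q x, G s q (F s q x + carry p s q) = x - carry p s q.

Lemma coefs_out {H n k} : H false false 0 = 0 -> (bnd n S <= k)%N -> coefs H p S n k = 0.
Proof.
by move=> H0 /bnd_out[le_nk /negbTE kS /negbTE prev0]; rewrite /coefs kS prev0 digit_eq0.
Qed.

Lemma radix_sum_carry_out {n N} :
  (bnd n S <= N)%N -> radix_sum p N (fun k => carry p (k \in S) (prev_in S k)) = 0.
Proof. by move=> /bnd_out[_ _ /negbTE prev0]; rewrite radix_sum_carry prev0 mul0r. Qed.

Lemma renormalize v :
  (forall k, 0 <= carried F p S v k < p%:Z) ->
  exists w : nat, [/\ w%:Z = radix_sum p (bnd v S) (coefs F p S v),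
    forall k, (digit p w k)%:Z = carried F p S v k
    & radix_sum p (bnd w S) (coefs G p S w) = v%:Z].
Proof.
move=> e_digit.
have e_out k : (bnd v S <= k)%N -> carried F p S v k = 0.
  move=> /[dup] /(coefs_out F0) e0 /bnd_out[_ /negbTE kS /negbTE prev0].
  by rewrite /carried e0 kS prev0 /carry /= mulr0 subr0.
have [w [w_val w_digit]] := radix_sum_digits p_gt1 _ _ e_digit e_out.
exists w; split=> //.
  by rewrite w_val /carried radix_sumD (radix_sum_carry_out (leqnn _)) addr0.
pose N := (bnd v S + bnd w S)%N.
rewrite -(radix_sum_ext p _ N _ (leq_addl _ _)) => [|k]; last exact: coefs_out.
rewrite (@eq_radix_sum p N _ (fun k => (digit p v k)%:Z - carry p (k \in S) (prev_in S k))).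
  rewrite radix_sumB (radix_sum_carry_out (n := v)) ?leq_addr // subr0 radix_sum_digit //.
  apply: (leq_trans (ltn_expl v p_gt1)); rewrite leq_pexp2l ?(ltnW p_gt1) //.
  by rewrite /N /bnd; lia.
by move=> k; rewrite /coefs w_digit GF.
Qed.

End Renormalization.

Lemma vdown0 p S : vdown p 0 S = 0.
Proof. by rewrite /vdown big1 // => k _; rewrite digit0 oppr0 if_same mul0r. Qed.

Lemma up_adm0 p S : up_adm p 0 S -> vup p 0 S = 0.
Proof.
case=> /(block_start_digitsP (fun m => digit p 0 m != 0%N)) start _.
have notinS k : k \notin S.
  by apply/negP => /block_start_exists[m /start]; rewrite digit0.
rewrite /vup big1 // => k _; rewrite (negbTE (notinS k)) digit0.
by rewrite (negbTE (notinS k.-1)) andbF mul0r.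
Qed.

Section Inversion.
Context {p v : nat} {S : seq nat}.
Hypotheses (p_gt1 : (1 < p)%N) (v_gt0 : (0 < v)%N).

Lemma up_adm_carried : up_adm p v S -> forall k, 0 <= carried up_coef p S v k < p%:Z.
Proof.
case=> /(block_start_digitsP (fun m => digit p v m != 0%N)) start.
move=> /(succ_closedP (fun i => digit p v i = p.-1)) exit k.
have := digit_lt p_gt1 v k; have := start k; have := exit k.
rewrite /carried /coefs /up_coef /carry /block_start /block_exit.
by case: (k \in S) (prev_in S k) => -[] /=; lia.
Qed.

Lemma down_adm_carried :
  down_adm p v S -> forall k, 0 <= carried (fun s _ => down_coef s) p S v k < p%:Z.
Proof.
case=> /(block_start_digitsP (fun m => digit p v m != 0%N)) start.
move=> /(succ_closedP (fun i => digit p v i = 0%N)) exit k.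
have := digit_lt p_gt1 v k; have := start k; have := exit k.
rewrite /carried /coefs /down_coef /carry /block_start /block_exit.
by case: (k \in S) (prev_in S k) => -[] /=; lia.
Qed.

Lemma up_adm_inversion : up_adm p v S ->
  exists w : nat, [/\ (0 < w)%N, w%:Z = vup p v S, down_adm p w S & vdown p w S = v%:Z].
Proof.
move=> /up_adm_carried /(renormalize (F := up_coef) (G := fun s _ => down_coef s) p_gt1).
move=> /(_ erefl erefl (@down_up_coef_carry p)).
case=> w [w_val w_digit w_inv]; rewrite -vdownE in w_inv.
exists w; split=> //.
- by rewrite lt0n; apply: contraTneq v_gt0 => w0; move: w_inv; rewrite w0 vdown0; lia.
- split.
  + apply/(block_start_digitsP (fun m => digit p w m != 0%N)) => k.
    have := digit_lt p_gt1 v k; have := w_digit k.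
    rewrite /carried /coefs /up_coef /carry /block_start.
    by case: (k \in S) (prev_in S k) => -[] /=; lia.
  + apply/(succ_closedP (fun i => digit p w i = 0%N)) => k.
    have := digit_lt p_gt1 v k; have := w_digit k.
    rewrite /carried /coefs /up_coef /carry /block_exit.
    by case: (k \in S) (prev_in S k) => -[] /=; lia.
Qed.

Lemma down_adm_inversion : down_adm p v S ->
  exists u : nat, [/\ (0 < u)%N, u%:Z = vdown p v S, up_adm p u S & vup p u S = v%:Z].
Proof.
move=> /down_adm_carried /(renormalize (F := fun s _ => down_coef s) (G := up_coef) p_gt1).
move=> /(_ erefl erefl (@up_down_coef_carry p)).
case=> u [u_val u_digit u_inv]; rewrite -vupE in u_inv.
have adm : up_adm p u S.
  split.
  + apply/(block_start_digitsP (fun m => digit p u m != 0%N)) => k.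
    have := digit_lt p_gt1 v k; have := u_digit k.
    rewrite /carried /coefs /down_coef /carry /block_start.
    by case: (k \in S) (prev_in S k) => -[] /=; lia.
  + apply/(succ_closedP (fun i => digit p u i = p.-1)) => k.
    have := digit_lt p_gt1 v k; have := u_digit k.
    rewrite /carried /coefs /down_coef /carry /block_exit.
    by case: (k \in S) (prev_in S k) => -[] /=; lia.
exists u; split=> //.
by rewrite lt0n; apply: contraTneq v_gt0 => u0; move: adm u_inv; rewrite u0 => /up_adm0 ->; lia.
Qed.

End Inversion.

Theorem lemma2p14 (p v : nat) (S : seq nat) :
  prime p -> (0 < v)%N ->
  (up_adm p v S ->
     exists w : nat, (0 < w)%N /\ w%:Z = vup p v S /\
       down_adm p w S /\ vdown p w S = v%:Z) /\
  (down_adm p v S ->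
     exists u : nat, (0 < u)%N /\ u%:Z = vdown p v S /\
       up_adm p u S /\ vup p u S = v%:Z).
Proof.
move=> /prime_gt1 p_gt1 v_gt0; split.
- by move=> /(up_adm_inversion p_gt1 v_gt0)[w []]; exists w.
- by move=> /(down_adm_inversion p_gt1 v_gt0)[u []]; exists u.
Qed.
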